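(* Let $\mathcal{T}=(\mathcal{V},\mathcal{E})$ obey the LC-PF model and covariance assumption of the context. Let $r_{\min},x_{\min}$ be the minimum line resistance and reactance in $\mathcal{T}$, and set $k_1=\min(r_{\min}^2,x_{\min}^2)\min_{d}\big(\Omega_p(d,d)+\Omega_q(d,d)+2\Omega_{pq}(d,d)\big)$, the inner minimum being over non-root nodes $d$. Then for every node $a$ and every node $b\neq a$ with $(ab)\notin\mathcal{E}$, the neighbor $c$ of $a$ on the path from $a$ to $b$ (so $(ac)\in\mathcal{E}$) satisfies $\phi_{ab}\ge\phi_{ac}+k_1$.
   Context: $\mathcal{T}=(\mathcal{V},\mathcal{E})$ is a tree with a distinguished root (substation) of degree one. Each edge $(ab)$ has resistance $r_{ab}>0$ and reactance $x_{ab}>0$. Let $H_{1/r},H_{1/x}$ be the weighted Laplacians with edge weights $1/r_{ab}$, $1/x_{ab}$, with the root row and column removed. Non-root nodes have random injections $p_a,q_a$. The LC-PF model gives $v=H_{1/r}^{-1}p+H_{1/x}^{-1}q$ and $\theta=H_{1/x}^{-1}p-H_{1/r}^{-1}q$ at non-root nodes; the root voltage is constant. Covariance assumption: $\Omega_p,\Omega_q$ are the covariances of $p,q$, and $\Omega_{pq}=\mathbb{E}[(p-\mathbb{E}p)(q-\mathbb{E}q)^T]=\Omega_{qp}^T$. For distinct non-root $a,b$, $\Omega_p(a,b)=\Omega_q(a,b)=\Omega_{qp}(a,b)=0$, and $\Omega_{qp}(a,a)\ge0$. Define $\phi_{ab}=\mathbb{E}[((v_a-\mathbb{E}v_a)-(v_b-\mathbb{E}v_b))^2]$.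 *)

From HB Require Import structures.
From mathcomp Require Import all_boot all_order all_algebra.
From mathcomp Require Import all_classical all_reals all_analysis.
Set Implicit Arguments. Unset Strict Implicit. Unset Printing Implicit Defensive.
Import Order.TTheory GRing.Theory Num.Theory.
Local Open Scope ring_scope.

(* Nodes of the network: 'I_n.+1, the root (substation) is ord0.
   Non-root nodes are indexed by 'I_n through (lift ord0). *)

Definition is_tree (V : finType) (adj : rel V) : Prop :=
  [/\ (forall a b, adj a b = adj b a),
      (forall a, ~~ adj a a),
      (forall a b, connect adj a b) &
      (forall (x : V) (s : seq V), uniq (x :: s) -> (2 <= size s)%N ->
          ~~ cycle adj (x :: s))].

Definition next_on_path (V : finType) (adj : rel V) (a b c : V) : Prop :=
  exists s : seq V, [/\ path adj a (c :: s), last c s = b & uniq (a :: c :: s)].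

Definition laplacian (R : numDomainType) (V : finType) (adj : rel V)
  (w : V -> V -> R) (a b : V) : R :=
  if a == b then \sum_(c | adj a c) w a c
  else if adj a b then - w a b else 0.

Definition red_laplacian (R : numDomainType) (n : nat) (adj : rel 'I_n.+1)
  (w : 'I_n.+1 -> 'I_n.+1 -> R) : 'M[R]_n :=
  \matrix_(i, j) laplacian adj w (lift ord0 i) (lift ord0 j).

Definition H_inv_weight (R : numFieldType) (n : nat) (adj : rel 'I_n.+1)
  (r : 'I_n.+1 -> 'I_n.+1 -> R) : 'M[R]_n :=
  red_laplacian adj (fun a b => (r a b)^-1).

Definition is_min_edge_weight (R : numDomainType) (V : finType) (adj : rel V)
  (r : V -> V -> R) (m : R) : Prop :=
  (exists a b, adj a b /\ r a b = m) /\ (forall a b, adj a b -> m <= r a b).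

Definition is_min_node (R : numDomainType) (n : nat) (f : 'I_n -> R) (m : R) : Prop :=
  (exists d, f d = m) /\ (forall d, m <= f d).

Definition lcpf_voltage (R : realType) (T : Type) (n : nat) (adj : rel 'I_n.+1)
  (r x : 'I_n.+1 -> 'I_n.+1 -> R) (v0 : R) (p q : 'I_n -> T -> R)
  (a : 'I_n.+1) : T -> R :=
  fun w => match unlift ord0 a with
           | Some i => \sum_j ((invmx (H_inv_weight adj r)) i j * p j w
                             + (invmx (H_inv_weight adj x)) i j * q j w)
           | None => v0
           end.

Definition phi d (T : measurableType d) (R : realType) (P : probability T R)
  (V : Type) (v : V -> T -> R) (a b : V) : \bar R :=
  'E_P[fun w => ((v a w - fine 'E_P[v a]) - (v b w - fine 'E_P[v b])) ^+ 2].

Definition omega_sum d (T : measurableType d) (R : realType) (P : probability T R)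
  (n : nat) (p q : 'I_n -> T -> R) (i : 'I_n) : R :=
  fine (covariance P (p i) (p i)) + fine (covariance P (q i) (q i))
  + 2 * fine (covariance P (p i) (q i)).

(* Column d of the inverse reduced Laplacian with conductances 1/r, extended by
   0 at the root, is the potential of a unit current entering at d and leaving
   at the root.  Across an edge it drops by r times the current through that
   edge, which is 1, -1 or 0 according to the sides of the edge on which d and
   the root lie.  Since injections at distinct nodes are uncorrelated, phi_ab is
   the sum over d of Var(R_d p_d + X_d q_d), where R_d and X_d are the potential
   drops from a to b for resistances and reactances.  Along the simple path
   a, c, c', ..., b the current from d keeps one orientation, so all these drops
   share its sign and each variance term grows superadditively along the path;
   moreover the edge (c, c') carries the whole current from some d, whose term
   therefore grows by at least min(r_min^2, x_min^2) times
   Omega_p(d,d) + Omega_q(d,d) + 2 Omega_pq(d,d). *)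

From HB Require Import structures.
From mathcomp Require Import all_boot all_order all_algebra.
From mathcomp Require Import all_classical all_reals all_analysis.
From mathcomp Require Import ring lra.
Set Implicit Arguments. Unset Strict Implicit. Unset Printing Implicit Defensive.
Import Order.TTheory GRing.Theory Num.Theory.
Local Open Scope ring_scope.

Section TreeCuts.
Variable V : finType.

Definition is_edge (u y z t : V) := ((z == u) && (t == y)) || ((z == y) && (t == u)).

Definition del_edge (e : rel V) (u y : V) : rel V :=
  fun z t => e z t && ~~ is_edge u y z t.

Lemma connect_del_edge (e : rel V) u y x t : connect e x t ->
  [\/ connect (del_edge e u y) x t, connect (del_edge e u y) x u |
      connect (del_edge e u y) x y].
Proof.
move=> /connectP[s pth ->]; elim: s x pth => [|z s IH] x /=.
  by move=> _; constructor 1; exact: connect0.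
move=> /andP[exz /IH] H.
case E: (is_edge u y x z).
  by move: E => /orP[] /andP[/eqP -> _]; [constructor 2 | constructor 3];
    exact: connect0.
have dxz : del_edge e u y x z by rewrite /del_edge exz E.
by case: H => H; [constructor 1 | constructor 2 | constructor 3];
  apply: connect_trans (connect1 dxz) H.
Qed.

Lemma connect_del_edge_sub (e : rel V) u y :
  subrel (connect (del_edge e u y)) (connect e).
Proof. by apply: connect_sub => z t /andP[ezt _]; exact: connect1. Qed.

Variable adj : rel V.

Definition cut_side (u y : V) : pred V := connect (del_edge adj u y) u.

Hypothesis adj_sym : symmetric adj.
Hypothesis adj_irr : irreflexive adj.
Hypothesis adj_acyclic : forall (x : V) (s : seq V), uniq (x :: s) ->
  (2 <= size s)%N -> ~~ cycle adj (x :: s).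

Lemma adj_neq u y : adj u y -> u != y.
Proof. by apply: contraTneq => ->; rewrite adj_irr. Qed.

Lemma connect_del_edgeC u y : connect_sym (del_edge adj u y).
Proof.
apply: sym_connect_sym => z t.
by rewrite /del_edge adj_sym /is_edge orbC (andbC (t == u)) (andbC (t == y)).
Qed.

Lemma cut_side_edge u y : adj u y -> ~~ cut_side u y y.
Proof.
move=> auy; apply/negP => /connectP[s pth yl].
case: (shortenP pth) yl => s' pth' uniq_s' _ yl.
have size_s' : (2 <= size s')%N.
  case: s' pth' uniq_s' yl => [|z [|z' s'']] //=.
  - by move=> _ _ uy; move: (adj_neq auy); rewrite uy eqxx.
  - by move=> /andP[/andP[_ not_uy] _] _ yz; move: not_uy; rewrite yz /is_edge !eqxx.
move: (adj_acyclic uniq_s' size_s'); rewrite /cycle rcons_path -yl adj_sym auy.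
by rewrite andbT (sub_path _ pth') // => z t /andP[].
Qed.

Lemma cut_side_step u0 u1 u2 z : adj u0 u1 -> adj u1 u2 -> u0 != u2 ->
  cut_side u0 u1 z -> cut_side u1 u2 z.
Proof.
move=> a01 a12 n02 z_side.
have n01 := negbTE (adj_neq a01).
have drop : subrel (connect (del_edge (del_edge adj u0 u1) u1 u2))
                   (connect (del_edge adj u1 u2)).
  apply: connect_sub => s t /andP[/andP[ast _] nst].
  by apply: connect1; rewrite /del_edge ast.
move: (z_side); rewrite /cut_side connect_del_edgeC.
case/(connect_del_edge u1 u2) => [/drop z_u0 | /drop z_u1 | z_u2].
- apply: (connect_trans (y := u0)); last by rewrite connect_del_edgeC.
  apply: connect1.
  by rewrite /del_edge /is_edge adj_sym a01 (negbTE n02) n01 !andbF.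
- by rewrite connect_del_edgeC.
- exfalso; move: (cut_side_edge a01); apply/negP/negPn.
  apply: connect_trans z_side (connect_trans (connect_del_edge_sub z_u2) (connect1 _)).
  by rewrite /del_edge adj_sym a12 /is_edge (eq_sym u2) (negbTE n02)
    (eq_sym u1) n01 !andbF.
Qed.

Lemma cut_side_path x y s z : path adj x (y :: s) -> uniq (x :: y :: s) ->
  cut_side x y z -> all (fun e => cut_side e.1 e.2 z) (zip (x :: y :: s) (y :: s)).
Proof.
elim: s x y => [|y2 s IH] x y /=; first by move=> _ _ ->.
move=> /andP[axy /andP[ayy2 pth]] /andP[x_notin uniq_s] z_side.
rewrite z_side; apply: IH; rewrite /= ?ayy2 //.
apply: cut_side_step axy ayy2 _ z_side.
by apply: contraNneq x_notin => ->; rewrite !inE eqxx orbT.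
Qed.

Context {R : realFieldType}.

(* The current through the edge u -> y when a unit current enters the tree at
   t and leaves it at o. *)
Definition unit_flow (t o u y : V) : R := (cut_side u y t)%:R - (cut_side u y o)%:R.

Lemma unit_flow_sqr t o u y :
  unit_flow t o u y ^+ 2 = 0 \/ unit_flow t o u y ^+ 2 = 1.
Proof.
by rewrite /unit_flow; case: (cut_side u y t); case: (cut_side u y o);
  rewrite ?subrr ?subr0 ?sub0r ?sqrrN ?expr1n ?expr0n; [left|right|right|left].
Qed.

Lemma unit_flow_edge u y o : adj u y -> exists t, unit_flow t o u y ^+ 2 = 1.
Proof.
move=> auy; case o_side: (cut_side u y o).
  by exists y; rewrite /unit_flow o_side (negbTE (cut_side_edge auy)) sub0r sqrrN expr1n.
by exists u; rewrite /unit_flow o_side [cut_side u y u]connect0 subr0 expr1n.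
Qed.

Lemma unit_flow_path_sign t o x s : path adj x s -> uniq (x :: s) ->
  exists2 eps : R, eps ^+ 2 = 1 &
    all (fun e => 0 <= eps * unit_flow t o e.1 e.2) (zip (x :: s) s).
Proof.
elim: s x => [|y s IH] x pth uniq_s; first by exists 1; rewrite ?expr1n.
case t_side: (cut_side x y t).
  exists 1; rewrite ?expr1n //; apply/allP => e.
  move/(allP (cut_side_path pth uniq_s t_side)).
  by rewrite mul1r /unit_flow => ->; rewrite subr_ge0 lern1 leq_b1.
case o_side: (cut_side x y o).
  exists (-1); rewrite ?sqrrN ?expr1n //; apply/allP => e.
  move/(allP (cut_side_path pth uniq_s o_side)).
  by rewrite mulN1r /unit_flow => ->; rewrite oppr_ge0 subr_le0 lern1 leq_b1.
case/andP: pth => _ pth; case/andP: uniq_s => _ uniq_s.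
have [eps eps2 tail] := IH y pth uniq_s.
by exists eps => //=; rewrite tail /unit_flow t_side o_side subrr mulr0 lexx.
Qed.

Lemma sumr_indicator (S : pred V) a : \sum_(z | S z) ((z == a)%:R : R) = (S a)%:R.
Proof.
case Sa: (S a); last by rewrite big1 // => z Sz; case: eqP Sz => // ->; rewrite Sa.
by rewrite (bigD1 a) //= eqxx big1 ?addr0 // => z /andP[_ /negbTE ->].
Qed.

Section Conductance.
Variable w : V -> V -> R.
Hypothesis w_sym : forall a b, w a b = w b a.

Definition outflow (X : V -> R) z := \sum_(y | adj z y) w z y * (X z - X y).

Lemma sum_outflow_cut (S : pred V) X : \sum_(z | S z) outflow X z =
  \sum_(z | S z) \sum_(y | adj z y && ~~ S y) w z y * (X z - X y).
Proof.
pose h z y := if S z && adj z y && S y then w z y * (X z - X y) else 0.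
have h_anti z y : h z y = - h y z.
  rewrite /h adj_sym; case: (S z); case: (S y); case: (adj y z); rewrite ?oppr0 //=.
  by rewrite w_sym -mulrN opprB.
have inner : \sum_(z | S z) \sum_(y | adj z y && S y) w z y * (X z - X y) =
    \sum_z \sum_y h z y.
  rewrite big_mkcond /=; apply: eq_bigr => z _; rewrite big_mkcond /= /h.
  by case: (S z) => /=; [apply: eq_bigr => y _; case: (adj z y && S y) | rewrite big1].
have inner0 : 0 = \sum_z \sum_y h z y.
  have : \sum_z \sum_y h z y = - \sum_z \sum_y h z y.
    rewrite {1}exchange_big -sumrN; apply: eq_bigr => y _.
    by rewrite -sumrN; apply: eq_bigr => z _; rewrite h_anti.
  by move=> H; lra.
rewrite -[RHS]add0r [X in X + _]inner0 -inner -big_split /=; apply: eq_bigr => z _.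
by rewrite /outflow (bigID S) /=.
Qed.

Lemma sum_outflow X : \sum_z outflow X z = 0.
Proof.
rewrite (sum_outflow_cut predT) big1 // => z _.
by rewrite big_pred0 // => y; rewrite andbF.
Qed.

Lemma outflow_dipole X t o : (forall z, z != o -> outflow X z = (z == t)%:R) ->
  forall z, outflow X z = (z == t)%:R - (z == o)%:R.
Proof.
move=> outflowE z; case: (eqVneq z o) => [->{z}|nzo]; last first.
  by rewrite outflowE // subr0.
have := sum_outflow X; rewrite (bigD1 o) //=.
under eq_bigr => z nzo do rewrite outflowE //.
rewrite sumr_indicator /= => /eqP; rewrite addr_eq0 => /eqP ->.
by case: (eqVneq t o); rewrite /= ?oppr0 ?subrr ?sub0r.
Qed.

(* (u, y) is the only edge leaving the side of u, so the current through it is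
   the total outflow of that side. *)
Lemma edge_current_cut X u y : adj u y ->
  w u y * (X u - X y) = \sum_(z | cut_side u y z) outflow X z.
Proof.
move=> auy; rewrite sum_outflow_cut.
have y_side := negbTE (cut_side_edge auy).
have u_side : cut_side u y u := connect0 _ _.
have cross z t : cut_side u y z -> adj z t -> ~~ cut_side u y t ->
    is_edge u y z t.
  move=> z_side azt; apply: contraNT => not_uy.
  by apply: connect_trans z_side (connect1 _); rewrite /del_edge azt.
rewrite (bigD1 u) //= [E in _ = _ + E]big1 ?addr0 => [|z /andP[z_side nzu]]; last first.
  apply: big_pred0 => t; apply/negP => /andP[azt /(cross _ _ z_side azt)].
  case/orP => /andP[/eqP zE /eqP tE]; first by rewrite zE eqxx in nzu.
  by rewrite zE y_side in z_side.
rewrite (bigD1 y) /= ?auy ?y_side // big_pred0 ?addr0 // => t.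
apply/negP => /andP[/andP[aut /(cross _ _ u_side aut)]].
case/orP => /andP[/eqP uE /eqP tE]; first by rewrite tE eqxx.
by move: (adj_neq auy); rewrite uE eqxx.
Qed.

Lemma edge_current_dipole X t o u y :
  (forall z, outflow X z = (z == t)%:R - (z == o)%:R) -> adj u y ->
  w u y * (X u - X y) = unit_flow t o u y.
Proof.
move=> outflowE auy; rewrite (edge_current_cut X auy).
by under eq_bigr do rewrite outflowE; rewrite sumrB !sumr_indicator.
Qed.

End Conductance.

End TreeCuts.

Section TreeFacts.
Variables (V : finType) (adj : rel V).
Hypothesis tree : is_tree adj.

Lemma tree_sym : symmetric adj. Proof. by case: tree. Qed.
Lemma tree_irr : irreflexive adj. Proof. by case: tree => _ irr _ _ a; exact/negbTE. Qed.
Lemma tree_connect a b : connect adj a b. Proof. by case: tree. Qed.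
Lemma tree_acyclic (x : V) (s : seq V) :
  uniq (x :: s) -> (2 <= size s)%N -> ~~ cycle adj (x :: s).
Proof. by case: tree => _ _ _; apply. Qed.

End TreeFacts.

Section ReducedLaplacian.
Variables (n : nat) (adj : rel 'I_n.+1).
Hypothesis tree : is_tree adj.
Variables (R : realFieldType) (r : 'I_n.+1 -> 'I_n.+1 -> R).
Hypothesis r_pos : forall a b, adj a b -> 0 < r a b.
Hypothesis r_sym : forall a b, r a b = r b a.

Let adj_sym := tree_sym tree.
Let adj_irr := tree_irr tree.
Let adj_acyclic := tree_acyclic tree.

Let w a b := (r a b)^-1.
Let w_sym a b : w a b = w b a. Proof. by rewrite /w r_sym. Qed.
Let H := H_inv_weight adj r.

Definition extend0 (f : 'I_n -> R) (u : 'I_n.+1) : R :=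
  if unlift ord0 u is Some i then f i else 0.

Lemma extend0_lift f i : extend0 f (lift ord0 i) = f i.
Proof. by rewrite /extend0 liftK. Qed.

Lemma extend0_root f : extend0 f ord0 = 0.
Proof. by rewrite /extend0 unlift_none. Qed.

Lemma H_inv_weight_mulE (f : 'I_n -> R) i :
  \sum_k H i k * f k = outflow adj w (extend0 f) (lift ord0 i).
Proof.
rewrite /outflow (eq_bigr (fun y => w (lift ord0 i) y * f i
    - w (lift ord0 i) y * extend0 f y)); last first.
  by move=> y _; rewrite extend0_lift mulrBr.
rewrite sumrB -mulr_suml [X in _ - X]big_mkcond big_ord_recl /= extend0_root.
rewrite mulr0 if_same add0r (bigD1 i) //= [X in _ = _ - X](bigD1 i) //=.
rewrite /H /H_inv_weight /red_laplacian mxE /laplacian eqxx adj_irr add0r.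
congr (_ + _); rewrite -sumrN; apply: eq_bigr => k nki.
rewrite !mxE /laplacian (inj_eq (@lift_inj _ ord0)) eq_sym (negbTE nki).
by rewrite extend0_lift; case: ifP; rewrite ?mul0r ?oppr0 ?mulNr.
Qed.

Lemma H_inv_weight_sym i k : H i k = H k i.
Proof.
rewrite /H /H_inv_weight !mxE /laplacian eq_sym.
by case: eqP => [->|_]; rewrite // adj_sym r_sym.
Qed.

Let w_neq0 u y : adj u y -> w u y != 0.
Proof. by move=> auy; rewrite invr_neq0 // gt_eqF // r_pos. Qed.

(* A potential with no net outflow anywhere carries no current, so it is
   constant on the tree; extended by 0 it vanishes at the root. *)
Lemma H_inv_weight_unit : H \in unitmx.
Proof.
rewrite -row_free_unit -kermx_eq0; apply/eqP/row_matrixP => j; rewrite row0.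
set v := row j _; pose X := extend0 (fun i => v 0 i).
have vH : v *m H = 0 by apply/sub_kermxP; exact: row_sub.
have no_outflow z : z != ord0 -> outflow adj w X z = (z == ord0)%:R.
  rewrite eq_sym => /unlift_some[k -> _].
  rewrite (negbTE (neq_lift _ _)) /X -H_inv_weight_mulE.
  transitivity (\sum_i v 0 i * H i k); last by have /rowP/(_ k) := vH; rewrite !mxE.
  by apply: eq_bigr => i _; rewrite H_inv_weight_sym mulrC.
have X_edge u y : adj u y -> X u = X y.
  move=> auy; apply/eqP; rewrite -subr_eq0 -(mulrI_eq0 _ (lregP (w_neq0 auy))).
  by rewrite (edge_current_dipole adj_sym adj_irr adj_acyclic w_sym
    (outflow_dipole adj_sym w_sym no_outflow) auy) /unit_flow subrr.
have X_const u : X u = X ord0.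
  have /connectP[s pth ->] := tree_connect tree u ord0.
  by elim: s u pth => [|y s IH] u //= /andP[auy /IH <-]; exact: X_edge.
apply/rowP => i; rewrite [RHS]mxE -(extend0_lift (fun i => v 0 i)) -/X.
by rewrite X_const /X extend0_root.
Qed.

Definition potential (d : 'I_n) : 'I_n.+1 -> R := extend0 (fun i => invmx H i d).

Lemma outflow_potential d z :
  outflow adj w (potential d) z = (z == lift ord0 d)%:R - (z == ord0)%:R.
Proof.
apply: (outflow_dipole adj_sym w_sym) => {}z; rewrite eq_sym => /unlift_some[k -> _].
have /matrixP/(_ k d) := mulmxV H_inv_weight_unit; rewrite !mxE => HHinv.
by rewrite -H_inv_weight_mulE HHinv (inj_eq (@lift_inj _ ord0)).
Qed.

Lemma potential_edge d u y : adj u y ->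
  potential d u - potential d y = unit_flow adj (lift ord0 d) ord0 u y * r u y.
Proof.
move=> auy; have r_neq0 : r u y != 0 by rewrite gt_eqF ?r_pos.
by rewrite -(edge_current_dipole adj_sym adj_irr adj_acyclic w_sym
  (outflow_potential d) auy) mulrAC /w mulVf ?mul1r.
Qed.

Lemma potential_path_head d (eps : R) x y s : path adj x (y :: s) ->
  all (fun e => 0 <= eps * unit_flow adj (lift ord0 d) ord0 e.1 e.2)
    (zip (x :: y :: s) (y :: s)) ->
  0 <= eps * unit_flow adj (lift ord0 d) ord0 x y * r x y
    <= eps * (potential d x - potential d (last y s)).
Proof.
elim: s x y => [|y2 s IH] x y /= /andP[axy pth] /andP[flow_xy flows].
all: have head : 0 <= eps * unit_flow adj (lift ord0 d) ord0 x y * r x y.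
all: try by rewrite mulr_ge0 // ltW // r_pos.
  by rewrite head potential_edge // mulrA lexx.
have /andP[tail_ge0 tail_le] := IH y y2 pth flows.
have -> : potential d x - potential d (last y2 s) =
    (potential d x - potential d y) + (potential d y - potential d (last y2 s)).
  by rewrite addrA subrK.
rewrite head potential_edge // [X in _ <= X]mulrDr mulrA lerDl.
exact: le_trans tail_ge0 tail_le.
Qed.

End ReducedLaplacian.

Section QuadraticForm.
Variables (R : realFieldType) (vp vq c : R).

Definition quad_form (a b : R) := a ^+ 2 * vp + b ^+ 2 * vq + 2 * a * b * c.

Lemma quad_form_sign (eps a b : R) :
  eps ^+ 2 = 1 -> quad_form (eps * a) (eps * b) = quad_form a b.
Proof.
move=> eps2; transitivity (eps ^+ 2 * quad_form a b); last by rewrite eps2 mul1r.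
by rewrite /quad_form; ring.
Qed.

Hypotheses (vp_ge0 : 0 <= vp) (vq_ge0 : 0 <= vq) (c_ge0 : 0 <= c).

Lemma quad_form_ge0 (a b : R) : 0 <= a -> 0 <= b -> 0 <= quad_form a b.
Proof. by move=> a_ge0 b_ge0; rewrite !addr_ge0 ?mulr_ge0 ?sqr_ge0. Qed.

Lemma quad_form_superadd (a b a' b' : R) : 0 <= a -> 0 <= b -> 0 <= a' -> 0 <= b' ->
  quad_form a b + quad_form a' b' <= quad_form (a + a') (b + b').
Proof.
move=> a_ge0 b_ge0 a'_ge0 b'_ge0; rewrite -subr_ge0.
have -> : quad_form (a + a') (b + b') - (quad_form a b + quad_form a' b') =
    2 * (a * a' * vp + b * b' * vq + (a * b' + a' * b) * c).
  by rewrite /quad_form; ring.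
by rewrite mulr_ge0 ?ler0n // ?(addr_ge0, mulr_ge0).
Qed.

Lemma quad_form_add_oriented (eps a b a' b' : R) : eps ^+ 2 = 1 ->
  0 <= eps * a -> 0 <= eps * b -> 0 <= eps * a' -> 0 <= eps * b' ->
  quad_form a b + quad_form (eps * a') (eps * b') <= quad_form (a + a') (b + b').
Proof.
move=> eps2 a_ge0 b_ge0 a'_ge0 b'_ge0.
rewrite -(quad_form_sign a b eps2) -(quad_form_sign (a + a') (b + b') eps2) !mulrDr.
exact: quad_form_superadd.
Qed.

Lemma quad_form_ge_min (rm xm a b : R) : 0 <= rm <= a -> 0 <= xm <= b ->
  Num.min (rm ^+ 2) (xm ^+ 2) * quad_form 1 1 <= quad_form a b.
Proof.
move=> /andP[rm_ge0 rm_le] /andP[xm_ge0 xm_le]; set m := Num.min _ _.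
have m_le_rx : m <= rm * xm.
  rewrite ge_min !expr2; apply/orP.
  case: (leP rm xm) => [rx|/ltW xr]; first by left; rewrite ler_wpM2l.
  by right; rewrite ler_wpM2r.
have m_le_a2 : m <= a ^+ 2.
  by rewrite ge_min expr2; apply/orP; left; rewrite ler_pM.
have m_le_b2 : m <= b ^+ 2.
  by rewrite ge_min !expr2; apply/orP; right; rewrite ler_pM.
have m_le_ab : m <= a * b by apply: le_trans m_le_rx _; rewrite ler_pM.
rewrite -subr_ge0.
have -> : quad_form a b - m * quad_form 1 1 =
    (a ^+ 2 - m) * vp + (b ^+ 2 - m) * vq + 2 * ((a * b - m) * c).
  by rewrite /quad_form; ring.
by rewrite !addr_ge0 ?mulr_ge0 ?subr_ge0.
Qed.

End QuadraticForm.

Section Covariance.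
Context d (T : measurableType d) (R : realType) (P : probability T R).
Local Notation L2 := (Lfun P 2%:E).

Definition cov (X Y : T -> R) : R := fine (covariance P X Y).

Lemma L2_L1 X : X \in L2 -> X \in Lfun P 1.
Proof. exact/Lfun_subset12/fin_num_measure. Qed.

Lemma L2D X Y : X \in L2 -> Y \in L2 -> X + Y \in L2.
Proof. by move=> X2 Y2; rewrite rpredD // lee1n. Qed.

Lemma L2Z a X : X \in L2 -> a \o* X \in L2.
Proof. by move=> X2; rewrite Lfun_scale // ler1n. Qed.

Lemma L2_sum (I : Type) (s : seq I) (X : I -> T -> R) :
  (forall i, X i \in L2) -> \sum_(i <- s) X i \in L2.
Proof. by move=> X2; rewrite rpred_sum // lee1n. Qed.

Lemma covE X Y : X \in L2 -> Y \in L2 -> covariance P X Y = (cov X Y)%:E.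
Proof.
move=> X2 Y2; rewrite /cov fineK //.
by apply: covariance_fin_num; [exact: L2_L1 | exact: L2_L1 | exact: Lfun2_mul_Lfun1].
Qed.

Lemma covC X Y : cov X Y = cov Y X.
Proof. by rewrite /cov covarianceC. Qed.

Lemma covDl X Y Z : X \in L2 -> Y \in L2 -> Z \in L2 ->
  cov (X + Y) Z = cov X Z + cov Y Z.
Proof.
by move=> X2 Y2 Z2; apply: EFin_inj; rewrite EFinD -!covE ?L2D //; exact: covarianceDl.
Qed.

Lemma covZl a X Y : X \in L2 -> Y \in L2 -> cov (a \o* X) Y = a * cov X Y.
Proof.
move=> X2 Y2; apply: EFin_inj; rewrite EFinM -!covE ?L2Z //.
by rewrite covarianceZl //; [exact: L2_L1 | exact: L2_L1 | exact: Lfun2_mul_Lfun1].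
Qed.

Lemma cov_suml (I : Type) (s : seq I) (X : I -> T -> R) Y :
  (forall i, X i \in L2) -> Y \in L2 ->
  cov (\sum_(i <- s) X i) Y = \sum_(i <- s) cov (X i) Y.
Proof.
move=> X2 Y2; elim: s => [|i s IH]; first by rewrite !big_nil /cov covariance_cst_l.
by rewrite !big_cons covDl ?IH ?L2_sum.
Qed.

Lemma cov_lin2 a b a' b' X Y X' Y' :
  X \in L2 -> Y \in L2 -> X' \in L2 -> Y' \in L2 ->
  cov (a \o* X + b \o* Y) (a' \o* X' + b' \o* Y') =
  a * a' * cov X X' + a * b' * cov X Y' + b * a' * cov Y X' + b * b' * cov Y Y'.
Proof.
move=> X2 Y2 X'2 Y'2.
rewrite covDl ?L2D ?L2Z // !covZl ?L2D ?L2Z //.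
rewrite !(covC _ (a' \o* X' + b' \o* Y')) !covDl ?L2Z // !covZl //.
by rewrite (covC X') (covC Y') (covC X') (covC Y'); ring.
Qed.

Lemma var_sum_uncorrelated (I : finType) (Z : I -> T -> R) :
  (forall i, Z i \in L2) -> (forall i j, i != j -> cov (Z i) (Z j) = 0) ->
  cov (\sum_i Z i) (\sum_i Z i) = \sum_i cov (Z i) (Z i).
Proof.
move=> Z2 uncorr; rewrite cov_suml ?L2_sum //; apply: eq_bigr => i _.
rewrite covC cov_suml // (bigD1 i) //= big1 ?addr0 ?covC // => j.
exact: uncorr.
Qed.

Lemma phi_covE (V : Type) (v : V -> T -> R) a b :
  v a \in Lfun P 1 -> v b \in Lfun P 1 ->
  phi P v a b = covariance P (v a - v b) (v a - v b).
Proof.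
move=> va1 vb1; have EB : ('E_P[v a - v b] = 'E_P[v a] - 'E_P[v b])%E.
  exact: expectationB.
rewrite /phi covariance.unlock EB fineB ?expectation_fin_num //.
by congr expectation; apply/funext => w; rewrite expr2 !fctE /=; ring.
Qed.

Section UncorrelatedPairs.
Variables (n : nat) (p q : 'I_n -> T -> R).
Hypotheses (p_L2 : forall i, p i \in L2) (q_L2 : forall i, q i \in L2).
Hypothesis uncorrelated : forall i j, i != j ->
  [/\ covariance P (p i) (p j) = 0%E, covariance P (q i) (q j) = 0%E &
      covariance P (q i) (p j) = 0%E].

Definition pair_variance j : R -> R -> R :=
  quad_form (cov (p j) (p j)) (cov (q j) (q j)) (cov (p j) (q j)).

Lemma omega_sum_pair_variance j : omega_sum P p q j = pair_variance j 1 1.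
Proof. by rewrite /omega_sum /pair_variance /quad_form /cov; ring. Qed.

Lemma phi_lin_comb (V : Type) (v : V -> T -> R) (alpha beta : V -> 'I_n -> R)
    (gamma : V -> R) :
  (forall u, v u = \sum_j (alpha u j \o* p j + beta u j \o* q j) + cst (gamma u)) ->
  forall a b, phi P v a b =
    (\sum_j pair_variance j (alpha a j - alpha b j) (beta a j - beta b j))%:E.
Proof.
move=> vE a b.
pose Z j := (alpha a j - alpha b j) \o* p j + (beta a j - beta b j) \o* q j.
have Z_L2 j : Z j \in L2 by rewrite L2D ?L2Z.
have v_L2 u : v u \in L2 by rewrite vE L2D ?L2_sum ?Lfun_cst // => j; rewrite L2D ?L2Z.
rewrite phi_covE ?L2_L1 //.
have -> : v a - v b = \sum_j Z j + cst (gamma a - gamma b).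
  rewrite !vE; apply/funext => w; rewrite !fctE !fct_sumE /=.
  rewrite opprD addrACA -sumrB; congr (_ + _); apply: eq_bigr => j _.
  by rewrite /Z !fctE /=; ring.
have cov_uncorr i j : i != j -> cov (Z i) (Z j) = 0.
  move=> nij; have nji : j != i by rewrite eq_sym.
  have [pp qq qp] := uncorrelated nij; have [_ _ pq] := uncorrelated nji.
  rewrite cov_lin2 // (covC (p i) (q j)) /cov pp qq qp pq /=; ring.
rewrite -[covariance P _ _]/(variance P _) varianceD_cst_r ?L2_sum //.
rewrite /variance covE ?L2_sum // var_sum_uncorrelated //; congr EFin.
by apply: eq_bigr => j _; rewrite cov_lin2 // (covC (q j)) /pair_variance /quad_form; ring.
Qed.

End UncorrelatedPairs.

End Covariance.

Section LinearCoupledPowerFlow.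
Context d (T : measurableType d) (R : realType) (P : probability T R).
Variables (n : nat) (adj : rel 'I_n.+1) (r x : 'I_n.+1 -> 'I_n.+1 -> R) (v0 : R).
Variables (p q : 'I_n -> T -> R).
Hypothesis tree : is_tree adj.
Hypotheses (r_pos : forall a b, adj a b -> 0 < r a b)
           (x_pos : forall a b, adj a b -> 0 < x a b).
Hypotheses (r_sym : forall a b, r a b = r b a) (x_sym : forall a b, x a b = x b a).
Hypotheses (p_L2 : forall i, p i \in Lfun P 2%:E) (q_L2 : forall i, q i \in Lfun P 2%:E).
Hypothesis uncorrelated : forall i j, i != j ->
  [/\ covariance P (p i) (p j) = 0%E, covariance P (q i) (q j) = 0%E &
      covariance P (q i) (p j) = 0%E].
Hypothesis pq_ge0 : forall i, 0 <= cov P (p i) (q i).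

Let adj_sym := tree_sym tree.
Let adj_irr := tree_irr tree.
Let adj_acyclic := tree_acyclic tree.

Let v := lcpf_voltage adj r x v0 p q.
Let Delta (w : 'I_n.+1 -> 'I_n.+1 -> R) j a b := potential adj w j a - potential adj w j b.

Lemma lcpf_voltageE u : v u =
  \sum_j (potential adj r j u \o* p j + potential adj x j u \o* q j)
  + cst (if u == ord0 then v0 else 0).
Proof.
apply/funext => w; rewrite /v /lcpf_voltage /potential /extend0 !fctE fct_sumE /=.
case: (unliftP ord0 u) => [i ->|->]; last first.
  by rewrite eqxx big1 ?add0r // => j _; rewrite !fctE /= !mulr0 addr0.
rewrite eq_sym (negbTE (neq_lift _ _)) addr0; apply: eq_bigr => j _.
by rewrite !fctE /= ![p j w * _]mulrC ![q j w * _]mulrC.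
Qed.

Lemma phi_lcpfE a b : phi P v a b =
  (\sum_j pair_variance P p q j (Delta r j a b) (Delta x j a b))%:E.
Proof. exact: (phi_lin_comb p_L2 q_L2 uncorrelated lcpf_voltageE). Qed.

Variables (rmin xmin omin : R).
Hypotheses (rmin_ge0 : 0 <= rmin) (xmin_ge0 : 0 <= xmin).
Hypotheses (rmin_le : forall a b, adj a b -> rmin <= r a b)
           (xmin_le : forall a b, adj a b -> xmin <= x a b).
Hypotheses (omin_ge0 : 0 <= omin) (omin_le : forall j, omin <= omega_sum P p q j).

Let k1 := Num.min (rmin ^+ 2) (xmin ^+ 2) * omin.

Let vp_ge0 j : 0 <= cov P (p j) (p j). Proof. exact/fine_ge0/variance_ge0. Qed.
Let vq_ge0 j : 0 <= cov P (q j) (q j). Proof. exact/fine_ge0/variance_ge0. Qed.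

Lemma path_drops_oriented j a c c2 s :
  path adj a (c :: c2 :: s) -> uniq (a :: c :: c2 :: s) ->
  exists2 eps : R, eps ^+ 2 = 1 &
    0 <= eps * unit_flow adj (lift ord0 j) ord0 c c2 /\
    forall w, (forall a b, adj a b -> 0 < w a b) -> (forall a b, w a b = w b a) ->
      0 <= eps * Delta w j a c /\
      0 <= eps * unit_flow adj (lift ord0 j) ord0 c c2 * w c c2
        <= eps * Delta w j c (last c2 s).
Proof.
move=> pth uniq_s.
have [eps eps2 /= /andP[flow_ac /andP[flow_cc2 flows]]] :=
  unit_flow_path_sign (R := R) adj_sym adj_irr adj_acyclic (lift ord0 j) ord0 pth uniq_s.
exists eps => //; split => // w w_pos w_sym; case/andP: pth => ac pth; split.
  by rewrite /Delta (potential_edge tree w_pos w_sym) // mulrA mulr_ge0 // ltW ?w_pos.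
by apply: potential_path_head => //=; rewrite flow_cc2.
Qed.

(* The factor [unit_flow ^+ 2] is 1 when the edge (c, c2) carries the current
   from j to the root, and 0 otherwise. *)
Lemma pair_variance_step j a c c2 s :
  path adj a (c :: c2 :: s) -> uniq (a :: c :: c2 :: s) ->
  pair_variance P p q j (Delta r j a c) (Delta x j a c)
    + unit_flow adj (lift ord0 j) ord0 c c2 ^+ 2 * k1
  <= pair_variance P p q j (Delta r j a (last c2 s)) (Delta x j a (last c2 s)).
Proof.
move=> pth uniq_s; set b := last c2 s; set f := unit_flow _ _ _ c c2.
have [eps eps2 [flow_cc2 drops]] := path_drops_oriented j pth uniq_s.
have [rac_ge0 /andP[r_cb_ge0 r_cb]] := drops r r_pos r_sym.
have [xac_ge0 /andP[x_cb_ge0 x_cb]] := drops x x_pos x_sym.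
have [vp vq vpq] := And3 (vp_ge0 j) (vq_ge0 j) (pq_ge0 j).
have split_ab w : Delta w j a b = Delta w j a c + Delta w j c b.
  by rewrite /Delta addrA subrK.
rewrite !split_ab; apply: le_trans (quad_form_add_oriented vp vq vpq eps2 rac_ge0 xac_ge0
  (le_trans r_cb_ge0 r_cb) (le_trans x_cb_ge0 x_cb)).
rewrite lerD2l; case: (unit_flow_sqr (R := R) adj (lift ord0 j) ord0 c c2) => [-> | f2].
  rewrite mul0r; apply: (quad_form_ge0 vp vq vpq).
    exact: le_trans r_cb_ge0 r_cb.
  exact: le_trans x_cb_ge0 x_cb.
have eps_f : eps * f = 1.
  have : (eps * f) ^+ 2 == 1 by rewrite exprMn eps2 f2 mul1r.
  by rewrite sqrf_eq1 => /orP[/eqP // | /eqP ef]; rewrite ef ler0N1 in flow_cc2.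
have cc2 : adj c c2 by case/andP: pth => _ /andP[].
rewrite eps_f mul1r in r_cb; rewrite eps_f mul1r in x_cb.
have rb : 0 <= rmin <= eps * Delta r j c b by rewrite rmin_ge0 (le_trans (rmin_le cc2)).
have xb : 0 <= xmin <= eps * Delta x j c b by rewrite xmin_ge0 (le_trans (xmin_le cc2)).
apply: le_trans (quad_form_ge_min vp vq vpq rb xb); rewrite f2 mul1r.
by rewrite ler_wpM2l ?le_min ?sqr_ge0 // (le_trans (omin_le j)) ?omega_sum_pair_variance.
Qed.

Lemma phi_next_on_path a b c : ~~ adj a b -> next_on_path adj a b c ->
  (phi P v a c + k1%:E <= phi P v a b)%E.
Proof.
move=> nab [s [pth last_s uniq_s]]; subst b.
case: s pth nab uniq_s => [|c2 s] pth nab uniq_s; first by rewrite (andP pth).1 in nab.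
have cc2 : adj c c2 by case/andP: pth => _ /andP[].
have [t flow_t] := unit_flow_edge (R := R) adj_sym adj_irr adj_acyclic ord0 cc2.
have [j0 tE] : exists j0, t = lift ord0 j0.
  case: (unliftP ord0 t) flow_t => [j0 -> _|->]; first by exists j0.
  by rewrite /unit_flow subrr expr2 mulr0 => /esym/eqP; rewrite oner_eq0.
rewrite tE in flow_t; have step j := pair_variance_step j pth uniq_s.
rewrite !phi_lcpfE -EFinD lee_fin (bigD1 j0) //= [X in _ <= X](bigD1 j0) //=.
have k1_ge0 : 0 <= k1 by rewrite mulr_ge0 // le_min !sqr_ge0.
have rest : \sum_(j | j != j0) pair_variance P p q j (Delta r j a c) (Delta x j a c)
    <= \sum_(j | j != j0) pair_variance P p q j (Delta r j a (last c2 s))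
                                                  (Delta x j a (last c2 s)).
  apply: ler_sum => j _; apply: le_trans (step j).
  by rewrite lerDl mulr_ge0 ?sqr_ge0.
by move: (step j0) rest; rewrite flow_t mul1r; lra.
Qed.

End LinearCoupledPowerFlow.

Theorem theorem8 (d : measure_display) (T : measurableType d) (R : realType)
  (P : probability T R) (n : nat) (adj : rel 'I_n.+1)
  (r x : 'I_n.+1 -> 'I_n.+1 -> R) (v0 : R)
  (p q : 'I_n -> {RV P >-> R}) (rmin xmin omin : R) :
  is_tree adj ->
  #|[set b | adj ord0 b]| = 1%N ->
  (forall a b, adj a b -> 0 < r a b /\ 0 < x a b) ->
  (forall a b, r a b = r b a /\ x a b = x b a) ->
  (forall i, (p i : T -> R) \in Lfun P 2%:E) ->
  (forall i, (q i : T -> R) \in Lfun P 2%:E) ->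
  (forall i j, i != j ->
     [/\ covariance P (p i) (p j) = 0%E,
         covariance P (q i) (q j) = 0%E &
         covariance P (q i) (p j) = 0%E]) ->
  (forall i, (0 <= covariance P (q i) (p i))%E) ->
  is_min_edge_weight adj r rmin ->
  is_min_edge_weight adj x xmin ->
  is_min_node (omega_sum P (fun i => (p i : T -> R)) (fun i => (q i : T -> R))) omin ->
  let k1 := Num.min (rmin ^+ 2) (xmin ^+ 2) * omin in
  let v := lcpf_voltage adj r x v0 (fun i => (p i : T -> R)) (fun i => (q i : T -> R)) in
  forall a b c : 'I_n.+1, b != a -> ~~ adj a b -> next_on_path adj a b c ->
    (phi P v a c + k1%:E <= phi P v a b)%E.
Proof.
move=> tree _ rx_pos rx_sym p_L2 q_L2 uncorr qp_ge0 [[ra [rb [arab rmin_eq]]] rmin_le]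
  [[xa [xb [axab xmin_eq]]] xmin_le] [[j1 omin_eq] omin_le] k1 v a b c _ nab next.
have pq_ge0 i : 0 <= cov P (p i) (q i) by rewrite /cov covarianceC fine_ge0.
have rmin_ge0 : 0 <= rmin by rewrite -rmin_eq ltW // (rx_pos _ _ arab).1.
have xmin_ge0 : 0 <= xmin by rewrite -xmin_eq ltW // (rx_pos _ _ axab).2.
have omin_ge0 : 0 <= omin.
  rewrite -omin_eq /omega_sum !addr_ge0 ?mulr_ge0 ?ler0n ?fine_ge0 ?variance_ge0 //.
  by rewrite covarianceC.
have r_pos a' b' h := (rx_pos a' b' h).1; have x_pos a' b' h := (rx_pos a' b' h).2.
have r_sym a' b' := (rx_sym a' b').1; have x_sym a' b' := (rx_sym a' b').2.
exact: (phi_next_on_path v0 tree r_pos x_pos r_sym x_sym p_L2 q_L2 uncorr pq_ge0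
  rmin_ge0 xmin_ge0 rmin_le xmin_le omin_ge0 omin_le nab next).
Qed.
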